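(* Let $M$ be a vertically $k$-connected matroid on $E$, where $k\geq 2$ and $r(M)\geq \max\{3k-5,2\}$. Then $M$ has a unique tangle $\mathcal T$ of order $k$. Moreover a subset $A$ of $E$ belongs to $\mathcal T$ if and only if $r(A)\leq k-2$.
   Context: For a matroid $M$ on $E$ with rank function $r$, the connectivity function is $\lambda_M(X)=r(X)+r(E-X)-r(M)+1$. A $(k-1)$-separation of $M$ is a partition $(A,B)$ of $E$ with $\lambda_M(A)\le k-1$. Here ''vertically $k$-connected'' means (loosely vertically $k$-connected): for every $(k-1)$-separation $(A,B)$ of $M$, either $r(A)\le k-2$ or $r(B)\le k-2$. A tangle of order $k$ in $M$ is a collection $\mathcal T$ of subsets of $E$ such that (T1) $\lambda_M(A)<k$ for all $A\in\mathcal T$; (T2) if $\lambda_M(A)\le k-1$ then $A\in\mathcal T$ or $E-A\in\mathcal T$; (T3) $A\cup B\cup C\ne E$ for all $A,B,C\in\mathcal T$; (T4) $E-\{e\}\notin\mathcal T$ for each $e\in E$. *)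

From mathcomp Require Import all_boot.
Set Implicit Arguments. Unset Strict Implicit. Unset Printing Implicit Defensive.

Definition matroid_rank (E : finType) (r : {set E} -> nat) : Prop :=
  [/\ (forall X : {set E}, r X <= #|X|),
      (forall X Y : {set E}, X \subset Y -> r X <= r Y)
    & (forall X Y : {set E}, r (X :|: Y) + r (X :&: Y) <= r X + r Y)].

Definition mrank (E : finType) (r : {set E} -> nat) : nat := r [set: E].

Definition conn (E : finType) (r : {set E} -> nat) (X : {set E}) : nat :=
  r X + r (~: X) + 1 - mrank r.

(* loosely vertically k-connected *)
Definition vert_conn (E : finType) (r : {set E} -> nat) (k : nat) : Prop :=
  forall A : {set E}, conn r A <= k - 1 -> r A <= k - 2 \/ r (~: A) <= k - 2.

Definition tangle (E : finType) (r : {set E} -> nat) (k : nat)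
    (T : {set {set E}}) : Prop :=
  [/\ (forall A, A \in T -> conn r A < k),
      (forall A, conn r A <= k - 1 -> A \in T \/ ~: A \in T),
      (forall A B C, A \in T -> B \in T -> C \in T -> A :|: B :|: C != [set: E])
    & (forall e : E, ~: [set e] \notin T)].

From mathcomp Require Import all_boot.
From mathcomp Require Import zify.
Set Implicit Arguments.
Unset Strict Implicit.
Unset Printing Implicit Defensive.

(* The tangle consists of the sets of rank at most k-2. Any tangle contains all
   of them: by induction on |Y|, if Y = (Y - e) + e had its complement in the
   tangle, the three sets Y - e, {e}, E - Y would cover E. Conversely, a tangle
   member A of larger rank has connectivity at most k-1, so vertical
   connectivity forces r(E - A) <= k-2, and then A, E - A, E - A cover E.
   Existence: (T3) holds because three sets of rank <= k-2 span rank at most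
   3k-6 < r(M), and (T4) because r(E - e) >= r(M) - 1 > k-2. *)

Section Rank.
Variables (E : finType) (r : {set E} -> nat).
Hypothesis r_matroid : matroid_rank r.

Lemma rank_mono (X Y : {set E}) : X \subset Y -> r X <= r Y.
Proof. by case: r_matroid => _ + _; apply. Qed.

Lemma rank_subadd (X Y : {set E}) : r (X :|: Y) <= r X + r Y.
Proof. by case: r_matroid => _ _ /(_ X Y); lia. Qed.

Lemma rank_le_card (X : {set E}) : r X <= #|X|.
Proof. by case: r_matroid. Qed.

Lemma rank_set1 (e : E) : r [set e] <= 1.
Proof. by rewrite -(cards1 e) rank_le_card. Qed.

Lemma rank_le_mrank (X : {set E}) : r X <= mrank r.
Proof. exact/rank_mono/subsetT. Qed.

Lemma conn_le_rank (X : {set E}) : conn r X <= r X + 1.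
Proof. by rewrite /conn; have := rank_le_mrank (~: X); lia. Qed.

End Rank.

Section Tangle.
Variables (E : finType) (r : {set E} -> nat) (k : nat) (T : {set {set E}}).
Hypothesis T_tangle : tangle r k T.

Lemma tangle_compl_setU (A B : {set E}) :
  A \in T -> B \in T -> ~: (A :|: B) \notin T.
Proof.
case: T_tangle => _ _ T3 _ AT BT; apply/negP => /(T3 _ _ _ AT BT).
by rewrite setUCr eqxx.
Qed.

Lemma setT_notin_tangle : [set: E] \notin T.
Proof.
case: T_tangle => _ _ T3 _; apply/negP => ET.
by have := T3 _ _ _ ET ET ET; rewrite !setUid eqxx.
Qed.

Lemma tangle_compl (A : {set E}) : A \in T -> ~: A \notin T.
Proof. by move=> AT; have := tangle_compl_setU AT AT; rewrite setUid. Qed.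

Hypothesis r_matroid : matroid_rank r.
Hypothesis k_ge2 : 2 <= k.

Lemma tangle_mem_small_rank (Y : {set E}) : r Y <= k - 2 -> Y \in T.
Proof.
case: T_tangle => _ T2 _ T4.
have T2_small X : r X <= k - 2 -> X \in T \/ ~: X \in T.
  by move=> rX; apply: T2; have := conn_le_rank r_matroid X; lia.
elim: {Y}#|Y| {-2}Y (eqxx #|Y|) => [|n IH] Y /eqP cardY rY.
  have -> : Y = set0 by apply/eqP; rewrite -cards_eq0 cardY.
  have r0 : r set0 <= k - 2 by have := rank_le_card r_matroid set0; rewrite cards0; lia.
  by case: (T2_small _ r0) => //; rewrite setC0 (negbTE setT_notin_tangle).
have [e eY] : exists e, e \in Y by apply/set0Pn; rewrite -card_gt0 cardY.
have YeT : Y :\ e \in T.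
  apply: IH; last exact: leq_trans (rank_mono r_matroid (subsetDl _ _)) rY.
  by move: cardY; rewrite (cardsD1 e Y) eY add1n => -[->].
have eT : [set e] \in T.
  have: r [set e] <= k - 2.
    by apply: leq_trans (rank_mono r_matroid _) rY; rewrite sub1set.
  by case/T2_small => // eCT; have := T4 e; rewrite eCT.
case: (T2_small Y rY) => // YCT.
by have := tangle_compl_setU YeT eT; rewrite setUC setD1K // YCT.
Qed.

End Tangle.

Section SmallRankTangle.
Variables (E : finType) (r : {set E} -> nat) (k : nat).
Hypotheses (r_matroid : matroid_rank r) (k_ge2 : 2 <= k) (r_vconn : vert_conn r k).

Definition small_rank_sets : {set {set E}} := [set A | r A <= k - 2].

Lemma small_rank_tangle :
  maxn (3 * k - 5) 2 <= mrank r -> tangle r k small_rank_sets.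
Proof.
rewrite geq_max => /andP[rM_ge rM_ge2].
have mrank_le_compl1 e : mrank r <= r (~: [set e]) + 1.
  have := rank_subadd r_matroid (~: [set e]) [set e].
  by rewrite setUC setUCr -/(mrank r); have := rank_set1 r_matroid e; lia.
split=> [A | A /r_vconn | A B C | e]; rewrite ?inE //.
- by have := conn_le_rank r_matroid A; lia.
- move=> rA rB rC; apply/negP => /eqP ABC_E.
  have := rank_subadd r_matroid (A :|: B) C; have := rank_subadd r_matroid A B.
  by rewrite ABC_E -/(mrank r); lia.
- by have := mrank_le_compl1 e; lia.
Qed.

Lemma tangle_eq_small_rank (T : {set {set E}}) :
  tangle r k T -> T = small_rank_sets.
Proof.
move=> T_tangle; have [T1 _ _ _] := T_tangle.
have small_mem := tangle_mem_small_rank T_tangle r_matroid k_ge2.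
apply/setP => A; rewrite inE; apply/idP/idP => [AT | /small_mem //].
have : conn r A <= k - 1 by have := T1 A AT; lia.
case/r_vconn => // /small_mem ACT.
by have := tangle_compl T_tangle AT; rewrite ACT.
Qed.

End SmallRankTangle.

Theorem lemma2p3 (E : finType) (r : {set E} -> nat) (k : nat) :
  matroid_rank r -> 2 <= k -> vert_conn r k ->
  maxn (3 * k - 5) 2 <= mrank r ->
  exists T : {set {set E}},
    [/\ tangle r k T,
        (forall T' : {set {set E}}, tangle r k T' -> T' = T)
      & (forall A : {set E}, A \in T <-> r A <= k - 2)].
Proof.
move=> r_matroid k_ge2 r_vconn rM_ge.
exists (small_rank_sets r k); split.
- exact: small_rank_tangle.
- exact: tangle_eq_small_rank.
- by move=> A; rewrite inE.
Qed.
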